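(* Let $G$ be a connected graph cellularly embedded on an orientable closed surface of genus $h\geq 0$. If $G$ has an even number of edges and has a perfect matching, then the total resonance graph $R_t(G)$ is bipartite.
   Context: A perfect matching of $G$ is a set of edges covering every vertex exactly once. A face of the embedding whose boundary is a cycle is said to have a facial cycle. The total resonance graph $R_t(G)$ has as vertices the perfect matchings of $G$, and two perfect matchings $M_1,M_2$ are adjacent if and only if the symmetric difference $M_1\oplus M_2=(M_1\setminus M_2)\cup(M_2\setminus M_1)$ is exactly the edge set of one facial cycle of $G$ (i.e. $M_2$ is obtained from $M_1$ by rotating along an $M_1$-alternating facial cycle). *)

(* A connected graph cellularly embedded on a closed
   orientable surface is encoded (Heffter-Edmonds) by a combinatorial map /
   rotation system on a finite set of darts D:
     alpha : fixed-point-free involution (its orbits = edges),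
     sigma : permutation (its orbits = vertices, cyclic order = rotation),
   faces = orbits of phi := sigma \o alpha.  The genus h of the surface is
   determined by Euler's formula and ranges over all h >= 0. *)
From mathcomp Require Import all_boot fingroup perm.
Set Implicit Arguments. Unset Strict Implicit. Unset Printing Implicit Defensive.

Section Maps.
Variable D : finType.
Variables alpha sigma : {perm D}.

Definition is_rotation_system : Prop :=
  forall d : D, alpha (alpha d) = d /\ alpha d != d.

Definition phi (d : D) : D := sigma (alpha d).

Definition same_vertex (x y : D) : bool := fconnect sigma x y.

Definition map_connected : Prop :=
  forall x y : D, connect (fun u v => (v == alpha u) || (v == sigma u)) x y.

Definition edges : {set {set D}} := [set [set d; alpha d] | d : D].

(* A set of edges is represented by the alpha-closed set of its darts.
   A perfect matching: each vertex is incident with exactly one dart of M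
   (a loop would contribute two darts, so loops never occur in a PM). *)
Definition perfect_matching (M : {set D}) : Prop :=
  (forall d, (d \in M) = (alpha d \in M)) /\
  (forall x : D, #|[set y in M | same_vertex x y]| = 1).

Definition face (f : D) : {set D} := [set y | fconnect phi f y].

Definition facial_cycle (f : D) : Prop :=
  (forall x y, x \in face f -> y \in face f -> same_vertex x y -> x = y) /\
  (forall x, x \in face f -> alpha x \notin face f).

Definition face_edges (f : D) : {set D} := face f :|: [set alpha x | x in face f].

Definition symdiff (A B : {set D}) : {set D} := (A :\: B) :|: (B :\: A).

Definition Rt_adj (M1 M2 : {set D}) : Prop :=
  perfect_matching M1 /\ perfect_matching M2 /\
  exists f : D, facial_cycle f /\ symdiff M1 M2 = face_edges f.

Definition Rt_bipartite : Prop :=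
  exists c : {set D} -> bool, forall M1 M2, Rt_adj M1 M2 -> c M1 != c M2.

End Maps.

(* Colour a perfect matching M by the parity of the weight of M, for a weight
   X : darts -> F_2 under which the edge set of every face has odd weight;
   rotating M along a face then flips the colour.  Such an X exists by the
   Fredholm alternative over F_2: if y : darts -> F_2 gives total weight 0 to
   the darts f whose face boundary contains x, for every dart x, then the
   y-weight of the face through a dart is invariant under alpha and under phi,
   hence constant since the map is connected, so the total y-weight is that
   constant times the number of faces.
   The number of faces is even: as phi = sigma o alpha, permutation parity gives
   #faces = #darts + #edges + #vertices (mod 2), there is an even number of
   darts and of edges, and #vertices = |M| is even since M is a union of edges. *)
From mathcomp Require Import all_boot fingroup perm.
From mathcomp Require Import all_algebra.
Set Implicit Arguments. Unset Strict Implicit. Unset Printing Implicit Defensive.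
Import GRing.Theory.

Local Open Scope ring_scope.

Lemma F2_cases (a : 'F_2) : a = 0 \/ a = 1.
Proof. by case: a => -[|[|//]] ?; [left | right]; apply: val_inj. Qed.

Lemma pchar_F2 : 2%N \in [pchar 'F_2].
Proof. exact: pchar_Fp. Qed.

Lemma F2_addrr (a : 'F_2) : a + a = 0.
Proof. exact: (addrr_pchar2 pchar_F2). Qed.

Lemma F2_addr_eq0 (a b : 'F_2) : a + b = 0 -> a = b.
Proof. by move/eqP; rewrite addr_eq0 (oppr_pchar2 pchar_F2) => /eqP. Qed.

Lemma F2_addr_eq1 (a b : 'F_2) : a + b = 1 -> (a == 0) != (b == 0).
Proof. by case: (F2_cases a) => ->; case: (F2_cases b) => ->. Qed.

Lemma F2_mulrn_even (a : 'F_2) n : ~~ odd n -> a *+ n = 0.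
Proof.
move=> even_n; rewrite -[n]odd_double_half (negbTE even_n) add0n -mul2n.
by rewrite mulrnA mulr2n F2_addrr mul0rn.
Qed.

Lemma sum_symdiff_F2 (T : finType) (A B : {set T}) (X : T -> 'F_2) :
  \sum_(x in symdiff A B) X x = \sum_(x in A) X x + \sum_(x in B) X x.
Proof.
rewrite big_mkcond [\sum_(x in A) _]big_mkcond [\sum_(x in B) _]big_mkcond.
rewrite -big_split; apply: eq_bigr => x _; rewrite !inE.
by case: (x \in A); case: (x \in B); rewrite /= ?addr0 ?add0r ?F2_addrr.
Qed.

Lemma mulmx_solvable (F : fieldType) m n (A : 'M[F]_(m, n)) (b : 'cV[F]_m) :
  (forall y : 'rV_m, y *m A = 0 -> y *m b = 0) -> exists x : 'cV_n, A *m x = b.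
Proof.
move=> orth_b; set K := kermx A.
have Kb : K *m b = 0.
  apply/row_matrixP => i; rewrite row_mul row0; apply: orth_b.
  by rewrite -row_mul mulmx_ker row0.
have sAK : (A^T <= kermx K^T)%MS.
  by apply/sub_kermxP; rewrite -trmx_mul mulmx_ker trmx0.
have sbK : (b^T <= kermx K^T)%MS.
  by apply/sub_kermxP; rewrite -trmx_mul Kb trmx0.
have eqAK : (A^T == kermx K^T)%MS.
  rewrite -(mxrank_leqif_eq sAK) mxrank_tr mxrank_ker mxrank_tr mxrank_ker.
  by rewrite subKn // rank_leq_row.
have /submxP[x def_b] : (b^T <= A^T)%MS by rewrite (eqmxP eqAK).
by exists x^T; rewrite -[b]trmxK def_b trmx_mul trmxK.
Qed.

Lemma sum_enum_rank (R : nmodType) (I : finType) (G : 'I_#|I| -> R) :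
  \sum_(i < #|I|) G i = \sum_x G (enum_rank x).
Proof. by rewrite (reindex enum_rank) //; exact/onW_bij/enum_rank_bij. Qed.

Lemma linear_system_solvable (F : fieldType) (I J : finType)
    (a : I -> J -> F) (b : I -> F) :
  (forall y : I -> F,
     (forall j, \sum_i y i * a i j = 0) -> \sum_i y i * b i = 0) ->
  exists x : J -> F, forall i, \sum_j a i j * x j = b i.
Proof.
move=> orth_b.
pose A : 'M_(#|I|, #|J|) := \matrix_(i, j) a (enum_val i) (enum_val j).
pose B : 'cV_#|I| := \col_i b (enum_val i).
have [x Ax] : exists x, A *m x = B.
  apply: mulmx_solvable => y yA; apply/rowP => k.
  rewrite ord1 !mxE sum_enum_rank; under eq_bigr do rewrite mxE enum_rankK.
  apply: (orth_b (fun i => y 0 (enum_rank i))) => j.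
  move/rowP: yA => /(_ (enum_rank j)); rewrite !mxE sum_enum_rank => yAj.
  by rewrite -[RHS]yAj; apply: eq_bigr => i _; rewrite !mxE !enum_rankK.
exists (fun j => x (enum_rank j) 0) => i.
move/colP: Ax => /(_ (enum_rank i)).
rewrite !mxE enum_rankK sum_enum_rank => <-.
by apply: eq_bigr => j _; rewrite !mxE !enum_rankK.
Qed.

Lemma fconnect_porbit (T : finType) (s : {perm T}) x y :
  fconnect s x y = (y \in porbit s x).
Proof.
apply/idP/porbitP => [con_xy | [i ->]]; last by rewrite permX fconnect_iter.
by exists (findex s x y); rewrite permX iter_findex.
Qed.

Section RotationSystem.

Variable D : finType.
Variables alpha sigma : {perm D}.
Hypothesis alpha_rot : is_rotation_system alpha.

Local Notation face := (face alpha sigma).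
Local Notation face_edges := (face_edges alpha sigma).

Let alphaK : involutive alpha.
Proof. by move=> x; case: (alpha_rot x). Qed.

Definition face_perm : {perm D} := (alpha * sigma)%g.

Lemma face_permE : face_perm =1 phi alpha sigma.
Proof. by move=> x; rewrite permM. Qed.

Lemma face_porbit f : face f = porbit face_perm f.
Proof.
by apply/setP => x; rewrite inE -fconnect_porbit (eq_fconnect face_permE).
Qed.

Lemma face_id x : x \in face x.
Proof. by rewrite face_porbit porbit_id. Qed.

Lemma face_eq x y : y \in face x -> face y = face x.
Proof. by rewrite !face_porbit => y_x; apply/eqP; rewrite eq_porbit_mem. Qed.

Lemma face_phi x : face (phi alpha sigma x) = face x.
Proof.
apply: face_eq.
by rewrite face_porbit -face_permE -{1}(expg1 face_perm) mem_porbit.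
Qed.

Lemma face_edges_incident x :
  [set f | x \in face_edges f] = face x :|: face (alpha x).
Proof.
apply/setP => f; rewrite in_set /face_edges !face_porbit.
by rewrite (can2_imset_pre _ alphaK alphaK) !inE !(porbit_sym _ f).
Qed.

Section FaceWeight.

Variable y : D -> 'F_2.
Hypothesis y_orth : forall x, \sum_(f | x \in face_edges f) y f = 0.

Let face_weight x := \sum_(f in face x) y f.

Let face_weight_alpha x : face_weight (alpha x) = face_weight x.
Proof.
have [ax_x | ax_x] := boolP (alpha x \in face x).
  by rewrite /face_weight (face_eq ax_x).
have disj : [disjoint face x & face (alpha x)].
  apply/pred0Pn => -[f /andP[f_x f_ax]]; case/negP: ax_x.
  by rewrite -(face_eq f_x) (face_eq f_ax) face_id.
apply/esym/F2_addr_eq0; rewrite -bigU //= -[RHS](y_orth x).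
apply: eq_bigl => f; rewrite [in LHS]unfold_in /= -in_setU.
by rewrite -face_edges_incident inE.
Qed.

Let face_weight_phi x : face_weight (phi alpha sigma x) = face_weight x.
Proof. by rewrite /face_weight face_phi. Qed.

Let face_weight_const (map_con : map_connected alpha sigma) x0 x :
  face_weight x = face_weight x0.
Proof.
pose same := [pred u | face_weight u == face_weight x0].
have closed_same : closed (fun u v => (v == alpha u) || (v == sigma u)) same.
  move=> u v /orP[] /eqP ->; rewrite !inE ?face_weight_alpha //.
  rewrite -[u in sigma u]alphaK -[sigma _]/(phi _ _ (alpha u)).
  by rewrite face_weight_phi face_weight_alpha.
have /(closed_connect closed_same) := map_con x0 x.
by rewrite !inE eqxx => /esym/eqP.
Qed.

Lemma face_orth_sum_eq0 :
  map_connected alpha sigma -> ~~ odd #|porbits face_perm| -> \sum_f y f = 0.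
Proof.
move=> map_con even_faces; have [x0 _ | D0] := pickP (@predT D); last first.
  by rewrite big_pred0.
rewrite (partition_big_imset (porbit face_perm)) /=.
rewrite -[RHS](F2_mulrn_even (face_weight x0) even_faces) -sumr_const.
apply: eq_big => // O /imsetP[x _ ->]; rewrite (face_weight_const map_con x x0).
by apply: eq_bigl => f; rewrite face_porbit eq_porbit_mem.
Qed.

End FaceWeight.

Lemma exists_odd_face_weight :
  map_connected alpha sigma -> ~~ odd #|porbits face_perm| ->
  exists X : D -> 'F_2, forall f, \sum_(x in face_edges f) X x = 1.
Proof.
move=> map_con even_faces.
have [X sumX] : exists X : D -> 'F_2,
    forall f, \sum_x (x \in face_edges f)%:R * X x = 1.
  apply: linear_system_solvable => y orth_y; under eq_bigr do rewrite mulr1.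
  apply: face_orth_sum_eq0 => // x; rewrite -[RHS](orth_y x) big_mkcond.
  by apply: eq_bigr => f _; case: (_ \in _); rewrite ?mulr1 ?mulr0.
exists X => f; rewrite -(sumX f) big_mkcond.
by apply: eq_bigr => x _; case: (_ \in _); rewrite ?mul1r ?mul0r.
Qed.

Lemma even_card_alpha_closed (A : {set D}) :
  (forall d, (d \in A) = (alpha d \in A)) -> ~~ odd #|A|.
Proof.
elim: {A}_.+1 {-2}A (ltnSn #|A|) => // n IH A ltAn closedA.
have [-> | [d d_A]] := set_0Vmem A; first by rewrite cards0.
have ad_d : alpha d != d by case: (alpha_rot d).
have cardA : #|A| = #|A :\ d :\ alpha d|.+2.
  rewrite (cardsD1 d A) (cardsD1 (alpha d) (A :\ d)).
  by rewrite d_A !inE ad_d -closedA d_A.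
rewrite cardA /= negbK; apply: IH => [|z].
  by rewrite -ltnS -ltnS -cardA ltnW.
rewrite !inE -closedA -[z in z == alpha d]alphaK !(inj_eq perm_inj).
by rewrite andbCA.
Qed.

Lemma porbit_alpha d : porbit alpha d = [set d; alpha d].
Proof.
apply/setP => z; rewrite !inE; apply/porbitP/idP => [[i ->] | /orP[] /eqP ->].
- rewrite permX; elim: i => [|i IH]; first by rewrite eqxx.
  by rewrite iterS; case/orP: IH => /eqP ->; rewrite ?alphaK eqxx ?orbT.
- by exists 0%N; rewrite perm1.
- by exists 1%N; rewrite expg1.
Qed.

Lemma porbits_alpha : porbits alpha = edges alpha.
Proof. exact: eq_imset porbit_alpha. Qed.

Lemma card_porbits_perfect_matching M :
  perfect_matching alpha sigma M -> #|porbits sigma| = #|M|.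
Proof.
case=> _ pmM.
have same_porbit x y :
    same_vertex sigma x y = (porbit sigma x == porbit sigma y).
  by rewrite /same_vertex fconnect_porbit eq_porbit_mem porbit_sym.
have -> : porbits sigma = porbit sigma @: M.
  apply/setP => O; apply/imsetP/imsetP => -[x _ ->]; last by exists x.
  have /eqP/cards1P[z vertex_x] := pmM x.
  have : z \in [set y in M | same_vertex sigma x y] by rewrite vertex_x set11.
  by rewrite inE same_porbit => /andP[z_M /eqP ->]; exists z.
apply: card_in_imset => x y x_M y_M eq_xy.
have /eqP/cards1P[z vertex_x] := pmM x.
have : [set x; y] \subset [set y in M | same_vertex sigma x y].
  by rewrite subUset !sub1set !inE x_M y_M !same_porbit eq_xy eqxx.
by rewrite vertex_x subUset !sub1set !inE => /andP[/eqP -> /eqP ->].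
Qed.

Lemma even_card_faces M :
  ~~ odd #|edges alpha| -> perfect_matching alpha sigma M ->
  ~~ odd #|porbits face_perm|.
Proof.
move=> even_edges pmM.
have even_darts : ~~ odd #|D|.
  by rewrite -cardsT; apply: even_card_alpha_closed => d; rewrite !inE.
have even_vertices : ~~ odd #|porbits sigma|.
  rewrite (card_porbits_perfect_matching pmM).
  by apply: even_card_alpha_closed; case: pmM.
have := odd_permM alpha sigma; rewrite /odd_perm -/face_perm porbits_alpha.
rewrite (negbTE even_darts) (negbTE even_edges) (negbTE even_vertices).
by move=> /= ->.
Qed.

Lemma bipartite_of_odd_face_weight (X : D -> 'F_2) :
  (forall f, \sum_(x in face_edges f) X x = 1) -> Rt_bipartite alpha sigma.
Proof.
move=> odd_X; exists (fun M : {set D} => \sum_(x in M) X x == 0).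
move=> M1 M2 [_ [_ [f [_ symdiff_M]]]]; apply: F2_addr_eq1.
by rewrite -sum_symdiff_F2 symdiff_M odd_X.
Qed.

End RotationSystem.

Theorem theorem2p6 (D : finType) (alpha sigma : {perm D}) :
  is_rotation_system alpha -> map_connected alpha sigma ->
  ~~ odd #|edges alpha| ->
  (exists M : {set D}, perfect_matching alpha sigma M) ->
  Rt_bipartite alpha sigma.
Proof.
move=> alpha_rot map_con even_edges [M pmM].
have even_faces := even_card_faces alpha_rot even_edges pmM.
have [X odd_X] := exists_odd_face_weight alpha_rot map_con even_faces.
exact: bipartite_of_odd_face_weight odd_X.
Qed.
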